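(* Let $\mathsf{X},\mathsf{Y}$ be Polish spaces and $c:\mathsf{X}\times\mathsf{Y}\to[0,\infty)$ continuous. Given a nonempty $c$-cyclically monotone set $\Gamma\subseteq\mathsf{X}\times\mathsf{Y}$, define $$I(x,y):=\sup_{k\ge2}\ \sup_{(x_i,y_i)_{i=2}^k\subset\Gamma}\ \sup_{\sigma\in\Sigma(k)}\ \sum_{i=1}^k c(x_i,y_i)-\sum_{i=1}^k c(x_i,y_{\sigma(i)}),\qquad (x_1,y_1):=(x,y).$$ Then $I:\mathsf{X}\times\mathsf{Y}\to[0,\infty]$ is lower semicontinuous and $I=0$ on $\Gamma$. Moreover, $$I(x,y)\ge\sup_{k\ge2}\ \sup_{(x_i,y_i)_{i=2}^k\subset\Gamma}\ \sum_{i=1}^k c(x_i,y_i)-\sum_{i=1}^k c(x_i,y_{i+1})\quad(y_{k+1}:=y_1),$$ and equality holds as soon as $x\in\mathsf{X}_0:=\operatorname{proj}_{\mathsf{X}}\Gamma$ or $y\in\mathsf{Y}_0:=\operatorname{proj}_{\mathsf{Y}}\Gamma$.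
   Context: $\Sigma(k)$ denotes the set of permutations of $\{1,\dots,k\}$. A set $\Gamma\subset\mathsf{X}\times\mathsf{Y}$ is $c$-cyclically monotone if $\sum_{i=1}^k c(x_i,y_i)\le\sum_{i=1}^k c(x_i,y_{i+1})$ for all $k\ge1$ and $(x_i,y_i)\in\Gamma$, with $y_{k+1}:=y_1$. *)

From HB Require Import structures.
From mathcomp Require Import all_boot all_order all_algebra all_fingroup.
From mathcomp Require Import all_classical all_reals all_analysis.
Set Implicit Arguments. Unset Strict Implicit. Unset Printing Implicit Defensive.
Import Order.TTheory GRing.Theory Num.Theory.
Import numFieldNormedType.Exports.
Local Open Scope classical_set_scope.
Local Open Scope ring_scope.

Definition polish (R : realType) (T : topologicalType) : Prop :=
  (exists d : T -> T -> R,
     (forall x y, 0 <= d x y) /\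
     (forall x y, d x y = 0 <-> x = y) /\
     (forall x y, d x y = d y x) /\
     (forall x y z, d x z <= d x y + d y z) /\
         (forall A : set T, open A <->
            (forall x, A x -> exists2 e : R, 0 < e & [set y | d x y < e] `<=` A)) /\
         (forall u : nat -> T,
            (forall e : R, 0 < e -> exists N, forall m n, (N <= m)%N -> (N <= n)%N ->
                d (u m) (u n) < e) ->
            exists l : T, forall e : R, 0 < e -> exists N, forall n, (N <= n)%N ->
                d l (u n) < e))
  /\ (exists S : set T, countable S /\ dense S).

Definition c_cyc_monotone (R : realType) (X Y : Type) (c : X * Y -> R)
  (Gam : set (X * Y)) : Prop :=
  forall (k : nat) (p : 'I_k.+1 -> X * Y), (forall i, Gam (p i)) ->
    \sum_(i < k.+1) c (p i) <= \sum_(i < k.+1) c ((p i).1, (p (ordS i)).2).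

Local Open Scope ereal_scope.

(* I(x,y): sup over k >= 2 (k = n.+2), points p_1 = (x,y), p_2..p_k in Gamma,
   and permutations sigma of {1..k}. *)
Definition Ifun (R : realType) (X Y : Type) (c : X * Y -> R)
  (Gam : set (X * Y)) (z : X * Y) : \bar R :=
  ereal_sup [set r | exists (n : nat) (p : 'I_n.+2 -> X * Y) (s : 'S_n.+2),
     [/\ p ord0 = z, (forall i, i != ord0 -> Gam (p i)) &
         r = (\sum_(i < n.+2) c (p i) - \sum_(i < n.+2) c ((p i).1, (p (s i)).2))%R%:E]].

Definition Icyc (R : realType) (X Y : Type) (c : X * Y -> R)
  (Gam : set (X * Y)) (z : X * Y) : \bar R :=
  ereal_sup [set r | exists (n : nat) (p : 'I_n.+2 -> X * Y),
     [/\ p ord0 = z, (forall i, i != ord0 -> Gam (p i)) &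
         r = (\sum_(i < n.+2) c (p i) - \sum_(i < n.+2) c ((p i).1, (p (ordS i)).2))%R%:E]].

(* Decomposing a permutation into cycles writes its gain as the sum of the
   cyclic gains of its cycles.  A cycle avoiding the first index lies in Gamma,
   so its gain is nonpositive by c-cyclical monotonicity.  Hence I = 0 on Gamma,
   and in general the gain is at most the cyclic gain of the cycle through the
   first index, which competes in the cyclic supremum; when that cycle is
   trivial its gain is 0, and a two-point cycle of gain 0 exists exactly when
   x lies in X0 or y in Y0.  Lower semicontinuity holds because I is a supremum
   of functions that are continuous in the first point. *)
From HB Require Import structures.
From mathcomp Require Import all_boot all_order all_algebra all_fingroup.
From mathcomp Require Import all_classical all_reals all_analysis.
Set Implicit Arguments. Unset Strict Implicit. Unset Printing Implicit Defensive.
Import Order.TTheory GRing.Theory Num.Theory.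
Import numFieldNormedType.Exports.
Local Open Scope classical_set_scope.
Local Open Scope ring_scope.

Section PermutationOrbits.
Variables (T : finType) (s : {perm T}).

Lemma card_porbit_succ a : exists k, #|porbit s a| = k.+1.
Proof. by case: #|_| (card_porbit_neq0 s a) => // k _; exists k. Qed.

Lemma iter_porbit_mod a j : iter (j %% #|porbit s a|) s a = iter j s a.
Proof.
rewrite {2}(divn_eq j #|porbit s a|) addnC iterD iterM.
suff -> : forall q, iter q (iter #|porbit s a| s) a = a by [].
by elim=> // q IHq; rewrite iterS IHq iter_porbit.
Qed.

Lemma iter_porbit_eq_id a j :
  (j < #|porbit s a|)%N -> (iter j s a == a) = (j == 0%N).
Proof.
move=> lt_j; have lt_0 : (0 < #|porbit s a|)%N by rewrite lt0n card_porbit_neq0.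
rewrite -{1}(nth_traject s lt_j) -[X in _ == X](nth_traject s lt_0).
by rewrite nth_uniq ?size_traject ?uniq_traject_porbit.
Qed.

Lemma mem_porbit_eq a b : b \in porbit s a -> porbit s b = porbit s a.
Proof. by move=> ba; apply/eqP; rewrite eq_porbit_mem. Qed.

Section Sums.
Variable V : nmodType.

Lemma sum_porbit a (F : T -> V) :
  \sum_(i in porbit s a) F i = \sum_(j < #|porbit s a|) F (iter j s a).
Proof.
rewrite (eq_bigl (mem (traject s a #|porbit s a|))); last exact: porbit_traject.
rewrite -big_uniq ?uniq_traject_porbit //= (big_nth a) size_traject big_mkord.
by apply: eq_bigr => j _; rewrite nth_traject.
Qed.

Lemma sum_porbits (F : T -> V) :
  \sum_i F i = \sum_(O in porbits s) \sum_(i in O) F i.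
Proof.
rewrite (partition_big_imset (porbit s)) /=.
by apply: eq_bigr => _ /imsetP[a _ ->]; apply: eq_bigl => i; rewrite eq_porbit_mem.
Qed.

End Sums.
End PermutationOrbits.

Section Gains.
Variables (R : realType) (X Y : Type) (c : X * Y -> R).

Definition perm_gain (T : finType) (p : T -> X * Y) (s : {perm T}) : R :=
  \sum_i c (p i) - \sum_i c ((p i).1, (p (s i)).2).

Definition cyc_gain n (p : 'I_n -> X * Y) : R :=
  \sum_(i < n) c (p i) - \sum_(i < n) c ((p i).1, (p (ordS i)).2).

Definition gain_on (T : finType) (p : T -> X * Y) (s : {perm T}) (A : {set T}) : R :=
  \sum_(i in A) (c (p i) - c ((p i).1, (p (s i)).2)).

Lemma perm_gain1 (T : finType) (p : T -> X * Y) : perm_gain p 1 = 0.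
Proof.
by apply/eqP; rewrite subr_eq0; apply/eqP/eq_bigr => i _; rewrite perm1 -surjective_pairing.
Qed.

Lemma perm_gain_ordS n (p : 'I_n -> X * Y) :
  perm_gain p (perm (@ordS_inj n)) = cyc_gain p.
Proof. by congr (_ - _); apply: eq_bigr => i _; rewrite permE. Qed.

Lemma perm_gain_porbits (T : finType) (p : T -> X * Y) (s : {perm T}) :
  perm_gain p s = \sum_(O in porbits s) gain_on p s O.
Proof. by rewrite /perm_gain -sumrB (sum_porbits s). Qed.

Lemma gain_on_porbit (T : finType) (p : T -> X * Y) (s : {perm T}) a k :
  #|porbit s a| = k.+1 ->
  gain_on p s (porbit s a) = cyc_gain (fun j : 'I_k.+1 => p (iter j s a)).
Proof.
move=> hk; rewrite /gain_on sum_porbit sumrB hk; congr (_ - _).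
apply: eq_bigr => j _; congr (c (_, (p _).2)).
by rewrite -iterS -(iter_porbit_mod s) hk.
Qed.

Variable Gam : set (X * Y).
Hypothesis hG : c_cyc_monotone c Gam.

Lemma cyc_gain_le0 n (p : 'I_n -> X * Y) : (forall i, Gam (p i)) -> cyc_gain p <= 0.
Proof.
case: n p => [|n] p pG; first by rewrite /cyc_gain !big_ord0 subrr.
by rewrite subr_le0; apply: hG.
Qed.

Lemma gain_on_porbit_le0 (T : finType) (p : T -> X * Y) (s : {perm T}) a :
  (forall i, i \in porbit s a -> Gam (p i)) -> gain_on p s (porbit s a) <= 0.
Proof.
move=> pG; have [k hk] := card_porbit_succ s a.
rewrite (gain_on_porbit _ hk); apply: cyc_gain_le0 => j.
by apply: pG; rewrite -permX mem_porbit.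
Qed.

Lemma perm_gain_le0 (T : finType) (p : T -> X * Y) (s : {perm T}) :
  (forall i, Gam (p i)) -> perm_gain p s <= 0.
Proof.
move=> pG; rewrite perm_gain_porbits; apply: sumr_le0 => _ /imsetP[a _ ->].
exact: gain_on_porbit_le0.
Qed.

Lemma perm_gain_le_gain_on_porbit (T : finType) (p : T -> X * Y) (s : {perm T}) a :
  (forall i, i \notin porbit s a -> Gam (p i)) ->
  perm_gain p s <= gain_on p s (porbit s a).
Proof.
move=> pG; rewrite perm_gain_porbits (bigD1 (porbit s a)) ?imset_f //= gerDl.
apply: sumr_le0 => _ /andP[/imsetP[b _ ->] ba]; apply: gain_on_porbit_le0 => i ib.
apply: pG; apply: contra ba => ia.
by rewrite -(mem_porbit_eq ib) (mem_porbit_eq ia).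
Qed.

End Gains.

Lemma lower_semicontinuous_ereal_sup (R : realType) (T : topologicalType) (I : Type)
    (D : set I) (f : I -> T -> R) :
  (forall i, D i -> continuous (f i)) ->
  lower_semicontinuous (fun z => ereal_sup [set (f i z)%:E | i in D]).
Proof.
move=> fC z a /ereal_sup_gt[_ [i Di <-]]; rewrite lte_fin => afz.
exists [set t | a < f i t]; first exact: cvgr_gt (fC i Di z) _ afz.
move=> t /= aft; apply: (@lt_le_trans _ _ (f i t)%:E); first by rewrite lte_fin.
by apply: ereal_sup_ubound; exists i.
Qed.

Lemma continuous_perm_gain (R : realType) (X Y T : topologicalType) (c : X * Y -> R)
    (I : finType) (s : {perm I}) (q : T -> I -> X * Y) :
  continuous c -> (forall i, continuous (q ^~ i)) ->
  continuous (fun t => perm_gain c (q t) s).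
Proof.
move=> cC qC; have sumC (F : I -> T -> R) : (forall i, continuous (F i)) ->
    continuous (fun t => \sum_i F i t).
  by move=> FC; apply: continuous_big => [|i _]; [exact: add_continuous | exact: FC].
move=> t; apply: cvgB; apply: sumC => {}i {}t; apply: continuous_comp (cC _).
  exact: qC.
by apply: cvg_pair; apply: continuous_comp (qC _ t) _; [exact: cvg_fst | exact: cvg_snd].
Qed.

Section SupremumFunctionals.
Variables (R : realType) (X Y : Type) (c : X * Y -> R) (Gam : set (X * Y)).
Local Open Scope ereal_scope.

Lemma perm_gain_le_Ifun n (p : 'I_n.+2 -> X * Y) (s : 'S_n.+2) :
  (forall i, i != ord0 -> Gam (p i)) -> (perm_gain c p s)%:E <= Ifun c Gam (p ord0).
Proof. by move=> pG; apply: ereal_sup_ubound; exists n, p, s. Qed.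

Lemma cyc_gain_le_Icyc n (p : 'I_n.+2 -> X * Y) :
  (forall i, i != ord0 -> Gam (p i)) -> (cyc_gain c p)%:E <= Icyc c Gam (p ord0).
Proof. by move=> pG; apply: ereal_sup_ubound; exists n, p. Qed.

Lemma Ifun_ge0 z : Gam !=set0 -> 0 <= Ifun c Gam z.
Proof.
case=> w Gw; pose p (i : 'I_2) := if i == ord0 then z else w.
apply: le_trans (perm_gain_le_Ifun (p := p) 1%g _); first by rewrite perm_gain1.
by move=> i; rewrite /p => /negbTE ->.
Qed.

Lemma Icyc_le_Ifun z : Icyc c Gam z <= Ifun c Gam z.
Proof.
apply: ge_ereal_sup => _ [n [p [<- pG ->]]].
by rewrite -/(cyc_gain c p) -perm_gain_ordS; exact: perm_gain_le_Ifun.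
Qed.

Lemma Icyc_ge0 x y : (fst @` Gam) x \/ (snd @` Gam) y -> 0 <= Icyc c Gam (x, y).
Proof.
move=> xy; have [w Gw w_xy] : exists2 w, Gam w & w.1 = x \/ w.2 = y.
  by case: xy => -[w Gw <-]; exists w => //; [left | right].
pose p (i : 'I_2) := if i == ord0 then (x, y) else w.
apply: (le_trans _ (cyc_gain_le_Icyc (p := p) _)); last first.
  by move=> i; rewrite /p => /negbTE ->.
suff -> : cyc_gain c p = 0%R by [].
rewrite /cyc_gain !big_ord_recr !big_ord0 /= /p /=.
by case: w_xy => <-; rewrite !add0r -surjective_pairing ?subrr // (addrC (c w)) subrr.
Qed.

Hypothesis hG : c_cyc_monotone c Gam.

Lemma Ifun_eq0 z : Gam z -> Ifun c Gam z = 0.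
Proof.
move=> Gz; apply/eqP; rewrite eq_le Ifun_ge0 ?andbT; last by exists z.
apply: ge_ereal_sup => _ [n [p [s [p0 pG ->]]]]; rewrite lee_fin.
by apply: (perm_gain_le0 hG) => i; case: (eqVneq i ord0) => [->|/pG //]; rewrite p0.
Qed.

Lemma Ifun_le_Icyc x y :
  (fst @` Gam) x \/ (snd @` Gam) y -> Ifun c Gam (x, y) <= Icyc c Gam (x, y).
Proof.
move=> xy; apply: ge_ereal_sup => _ [n [p [s [p0 pG ->]]]].
apply: (@le_trans _ _ (gain_on c p s (porbit s ord0))%:E).
  rewrite lee_fin; apply: (perm_gain_le_gain_on_porbit hG) => i i0.
  by apply: pG; apply: contra i0 => /eqP ->; exact: porbit_id.
have [k hk] := card_porbit_succ s ord0; rewrite (gain_on_porbit _ _ hk).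
case: k hk => [|k] hk.
  by rewrite /cyc_gain !big_ord1 -surjective_pairing subrr; exact: Icyc_ge0.
rewrite -p0; apply: cyc_gain_le_Icyc => j j0; apply: pG.
by rewrite iter_porbit_eq_id ?hk.
Qed.

End SupremumFunctionals.

Lemma lower_semicontinuous_Ifun (R : realType) (X Y : topologicalType)
    (c : X * Y -> R) (Gam : set (X * Y)) :
  continuous c -> lower_semicontinuous (Ifun c Gam).
Proof.
move=> cC.
pose I := {n : nat & (('I_n.+2 -> X * Y) * 'S_n.+2)%type}.
pose D := [set i : I | forall j, j != ord0 -> Gam ((projT2 i).1 j)].
pose f (i : I) z :=
  perm_gain c (fun j => if j == ord0 then z else (projT2 i).1 j) (projT2 i).2.
have -> : Ifun c Gam = fun z => ereal_sup [set (f i z)%:E | i in D].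
  apply/funext => z; congr ereal_sup; apply/seteqP; split => r.
    move=> [n [p [s [p0 pG ->]]]]; exists (existT _ n (p, s)) => //.
    by congr (EFin (perm_gain c _ _)); apply/funext => j; case: eqP => // ->.
  move=> [[n [p s]] /= pG <-].
  exists n, (fun j => if j == ord0 then z else p j), s.
  by split => // j j0; rewrite (negbTE j0); exact: pG.
apply: lower_semicontinuous_ereal_sup => -[n [p s]] _.
apply: continuous_perm_gain => // j.
by case: (j == ord0) => t; [exact: cvg_id | exact: cvg_cst].
Qed.

Theorem lemma4p2 (R : realType) (X Y : topologicalType)
  (hX : polish R X) (hY : polish R Y)
  (c : X * Y -> R) (hc : continuous c) (hc0 : forall z, 0 <= c z)
  (Gam : set (X * Y)) (hG0 : Gam !=set0) (hG : c_cyc_monotone c Gam) :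
  [/\ lower_semicontinuous (Ifun c Gam),
      (forall z, (0 <= Ifun c Gam z)%E),
      (forall z, Gam z -> Ifun c Gam z = 0%E),
      (forall z, (Icyc c Gam z <= Ifun c Gam z)%E) &
      (forall x y, (fst @` Gam) x \/ (snd @` Gam) y ->
         Ifun c Gam (x, y) = Icyc c Gam (x, y))].
Proof.
split=> [||||x y xy].
- exact: lower_semicontinuous_Ifun.
- by move=> z; exact: Ifun_ge0.
- exact: Ifun_eq0.
- exact: Icyc_le_Ifun.
- by apply/eqP; rewrite eq_le Icyc_le_Ifun Ifun_le_Icyc.
Qed.
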